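(* Let $\mathbb{C}$ be a modified category of interest, $\mathcal{X}=(\partial\colon E\to R)$, $\mathcal{X}'=(\partial'\colon E'\to R')$ crossed modules in $\mathbb{C}$, and $f=(f_1,f_0)$, $g=(g_1,g_0)$, $k=(k_1,k_0)$ crossed module morphisms $\mathcal{X}\to\mathcal{X}'$. Let $s$ be an $f_0$-derivation connecting $f$ to $g$ and $s'$ a $g_0$-derivation connecting $g$ to $k$. Then the map $s+s'\colon R\to E'$, $(s+s')(r)=s(r)+s'(r)$, is an $f_0$-derivation connecting $f$ to $k$.
   Context: A modified category of interest (MCI) is a category $\mathbb{C}$ of groups (written additively) with additional unary and binary operations: $\Omega=\Omega_0\cup\Omega_1\cup\Omega_2$, $\Omega_0=\{0\}$, $\Omega_2'=\Omega_2\setminus\{+\}$ closed under $x*^\circ y=y*x$, with $x*(y+z)=x*y+x*z$, unary operations other than $-$ compatible with $+$ and $*$, $x_1+(x_2*x_3)=(x_2*x_3)+x_1$, and each $(x_1*x_2)\bar*x_3$ expressible as a word in the products $x_i(x_jx_k),(x_jx_k)x_i$, $i\in\{1,2\}$. A derived action of $R$ on $E$ consists of maps $r\cdot e=\sigma(r)+e-\sigma(r)$, $r*e=\sigma(r)*e$ ($*\in\Omega_2'$) induced by a split extension of $R$ by $E$ with section $\sigma$. A crossed module is a morphism $\partial\colon E\to R$ with a derived action satisfying $\partial(r\cdot e)=r+\partial(e)-r$, $\partial(r*e)=r*\partial(e)$, $\partial(e)\cdot e'=e+e'-e$, $\partial(e)*e'=e*e'$. A crossed module morphism $(f_1,f_0)$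 satisfies $\partial'f_1=f_0\partial$, $f_1(r\cdot e)=f_0(r)\cdot f_1(e)$, $f_1(r*e)=f_0(r)*f_1(e)$. For a morphism $f_0\colon R\to R'$, an $f_0$-derivation is a map $s\colon R\to E'$ with $s(g+h)=\big(f_0(-h)\cdot s(g)\big)+s(h)$ and $s(g*h)=f_0(g)*s(h)+f_0(h)*^\circ s(g)+s(g)*s(h)$ for all $g,h\in R$, $*\in\Omega_2'$. An $f_0$-derivation $s$ connects $f$ to $g$ if $g_0(r)=f_0(r)+\partial'(s(r))$ and $g_1(e)=f_1(e)+s(\partial(e))$ for all $r\in R$, $e\in E$. *)

Set Implicit Arguments.
Unset Strict Implicit.

(** * Signature of a modified category of interest.
    [Op1] = Omega_1' (unary operations other than -),
    [Op2] = Omega_2' = Omega_2 \ {+}, closed under the opposite operation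
    [opc o] = o^circ (x o^circ y = y o x). *)
Record Sig := { Op1 : Type; Op2 : Type; opc : Op2 -> Op2 }.

(** Groups (written additively, not necessarily abelian) with the extra
    operations of the signature. *)
Record OGroup (Sg : Sig) := {
  carrier :> Type;
  zero : carrier;
  add : carrier -> carrier -> carrier;
  opp : carrier -> carrier;
  un : Op1 Sg -> carrier -> carrier;
  bin : Op2 Sg -> carrier -> carrier -> carrier }.

Arguments zero {Sg} _.
Arguments add {Sg _} _ _.
Arguments opp {Sg _} _.
Arguments un {Sg _} _ _.
Arguments bin {Sg _} _ _ _.

Declare Scope og_scope.
Delimit Scope og_scope with og.
Notation "x + y" := (add x y) : og_scope.
Notation "- x" := (opp x) : og_scope.
Notation "x - y" := (add x (opp y)) : og_scope.
Open Scope og_scope.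

Definition mci_object_axioms (Sg : Sig) (A : OGroup Sg) : Prop :=
  (forall x y z : A, x + (y + z) = (x + y) + z) /\
  (forall x : A, zero A + x = x) /\
  (forall x : A, x + zero A = x) /\
  (forall x : A, - x + x = zero A) /\
  (forall x : A, x + - x = zero A) /\
  (forall (o : Op2 Sg) (x y : A), bin (opc o) x y = bin o y x) /\
  (forall (o : Op2 Sg) (x y z : A), bin o x (y + z) = bin o x y + bin o x z) /\
  (forall (w : Op1 Sg) (x y : A), un w (x + y) = un w x + un w y) /\
  (forall (w : Op1 Sg) (o : Op2 Sg) (x y : A), un w (bin o x y) = bin o (un w x) y) /\
  (forall (o : Op2 Sg) (x1 x2 x3 : A), x1 + bin o x2 x3 = bin o x2 x3 + x1).

(** Words in the products x_i (x_j x_k), (x_j x_k) x_i with i in {1,2} and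
    {j,k} = {1,2,3} \ {i}. A leaf [wleaf i2 sw right o1 o2] denotes, with
    a := x_i (i = 2 iff i2), (b, c) the two other variables in increasing
    order (swapped iff sw):  a o1 (b o2 c)  if ~~right,  (b o2 c) o1 a  if right. *)
Inductive word (Sg : Sig) : Type :=
| wzero : word Sg
| wadd : word Sg -> word Sg -> word Sg
| wopp : word Sg -> word Sg
| wleaf : bool -> bool -> bool -> Op2 Sg -> Op2 Sg -> word Sg.

Fixpoint weval (Sg : Sig) (A : OGroup Sg) (x1 x2 x3 : A) (W : word Sg) : A :=
  match W with
  | wzero _ => zero A
  | wadd W1 W2 => weval x1 x2 x3 W1 + weval x1 x2 x3 W2
  | wopp W1 => - weval x1 x2 x3 W1
  | wleaf i2 sw rt o1 o2 =>
      let a := if i2 then x2 else x1 in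
      let b0 := if i2 then x1 else x2 in
      let b := if sw then x3 else b0 in
      let c := if sw then b0 else x3 in
      if rt then bin o1 (bin o2 b c) a else bin o1 a (bin o2 b c)
  end.

(** A modified category of interest: a class of Omega-groups (its objects)
    satisfying the axioms above, including the word axiom
    (x1 * x2) *bar x3 = W(...) uniformly over the class. *)
Record MCI (Sg : Sig) := {
  inC : OGroup Sg -> Prop;
  inC_axioms : forall A, inC A -> mci_object_axioms A;
  inC_word : forall o ob : Op2 Sg, exists W : word Sg,
      forall A, inC A -> forall x1 x2 x3 : A,
        bin ob (bin o x1 x2) x3 = weval x1 x2 x3 W }.

Definition hom (Sg : Sig) (A B : OGroup Sg) (f : A -> B) : Prop :=
  f (zero A) = zero B /\
  (forall x y, f (x + y) = f x + f y) /\
  (forall x, f (- x) = - f x) /\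
  (forall w x, f (un w x) = un w (f x)) /\
  (forall o x y, f (bin o x y) = bin o (f x) (f y)).

Definition split_ext (Sg : Sig) (C : MCI Sg) (R E B : OGroup Sg)
    (i : E -> B) (p : B -> R) (sigma : R -> B) : Prop :=
  inC C E /\ inC C R /\ inC C B /\
  hom i /\ hom p /\ hom sigma /\
  (forall e e', i e = i e' -> e = e') /\
  (forall b, p b = zero R <-> exists e, i e = b) /\
  (forall r, p (sigma r) = r).

Definition derived_action (Sg : Sig) (C : MCI Sg) (R E : OGroup Sg)
    (act : R -> E -> E) (bact : Op2 Sg -> R -> E -> E) : Prop :=
  exists (B : OGroup Sg) (i : E -> B) (p : B -> R) (sigma : R -> B),
    split_ext C i p sigma /\
    (forall r e, i (act r e) = sigma r + i e - sigma r) /\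
    (forall o r e, i (bact o r e) = bin o (sigma r) (i e)).

Definition crossed_module (Sg : Sig) (C : MCI Sg) (E R : OGroup Sg)
    (d : E -> R) (act : R -> E -> E) (bact : Op2 Sg -> R -> E -> E) : Prop :=
  hom d /\ derived_action C act bact /\
  (forall r e, d (act r e) = r + d e - r) /\
  (forall o r e, d (bact o r e) = bin o r (d e)) /\
  (forall e e', act (d e) e' = e + e' - e) /\
  (forall o e e', bact o (d e) e' = bin o e e').

Definition cm_morphism (Sg : Sig) (E R E' R' : OGroup Sg)
    (d : E -> R) (act : R -> E -> E) (bact : Op2 Sg -> R -> E -> E)
    (d' : E' -> R') (act' : R' -> E' -> E') (bact' : Op2 Sg -> R' -> E' -> E')
    (f1 : E -> E') (f0 : R -> R') : Prop :=
  hom f1 /\ hom f0 /\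
  (forall e, d' (f1 e) = f0 (d e)) /\
  (forall r e, f1 (act r e) = act' (f0 r) (f1 e)) /\
  (forall o r e, f1 (bact o r e) = bact' o (f0 r) (f1 e)).

Definition derivation (Sg : Sig) (R E' R' : OGroup Sg)
    (act' : R' -> E' -> E') (bact' : Op2 Sg -> R' -> E' -> E')
    (f0 : R -> R') (s : R -> E') : Prop :=
  (forall g h, s (g + h) = act' (f0 (- h)) (s g) + s h) /\
  (forall o g h, s (bin o g h) =
      bact' o (f0 g) (s h) + bact' (opc o) (f0 h) (s g) + bin o (s g) (s h)).

Definition connects (Sg : Sig) (E R E' R' : OGroup Sg)
    (d : E -> R) (d' : E' -> R') (s : R -> E')
    (f1 : E -> E') (f0 : R -> R') (g1 : E -> E') (g0 : R -> R') : Prop :=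
  (forall r, g0 r = f0 r + d' (s r)) /\
  (forall e, g1 e = f1 e + s (d e)).

(** The connection equations compose by associativity.  For
    the derivation equations one rewrites [g0 = f0 + d' s]: the action of
    [d' (s r)] is conjugation by [s r] (Peiffer identity) and the products
    [d' (s r) * e] are the products [s r * e].  In the additive rule the
    conjugations by [s (-h)] cancel against [s h] because
    [f0 (-h) . s (-h) = - s h]; in the product rule the extra terms are
    central, so they can be moved into place. *)

Set Implicit Arguments.
Open Scope og_scope.

Section GroupLaws.

Variables (Sg : Sig) (A : OGroup Sg).
Hypothesis HA : mci_object_axioms A.

Lemma addA (x y z : A) : x + (y + z) = x + y + z.
Proof. now destruct HA as (H & _). Qed.

Lemma add0x (x : A) : zero A + x = x.
Proof. now destruct HA as (_ & H & _). Qed.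

Lemma addx0 (x : A) : x + zero A = x.
Proof. now destruct HA as (_ & _ & H & _). Qed.

Lemma addNx (x : A) : - x + x = zero A.
Proof. now destruct HA as (_ & _ & _ & H & _). Qed.

Lemma addxN (x : A) : x + - x = zero A.
Proof. now destruct HA as (_ & _ & _ & _ & H & _). Qed.

Lemma bin_opc o (x y : A) : bin (opc o) x y = bin o y x.
Proof. now destruct HA as (_ & _ & _ & _ & _ & H & _). Qed.

Lemma binDr o (x y z : A) : bin o x (y + z) = bin o x y + bin o x z.
Proof. now destruct HA as (_ & _ & _ & _ & _ & _ & H & _). Qed.

Lemma add_binC o (x y z : A) : x + bin o y z = bin o y z + x.
Proof. now destruct HA as (_ & _ & _ & _ & _ & _ & _ & _ & _ & H). Qed.

Lemma binDl o (x y z : A) : bin o (x + y) z = bin o x z + bin o y z.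
Proof. now rewrite <- !(bin_opc o z), binDr. Qed.

Lemma addKx (x y : A) : - x + (x + y) = y.
Proof. now rewrite addA, addNx, add0x. Qed.

Lemma addNKx (x y : A) : x + (- x + y) = y.
Proof. now rewrite addA, addxN, add0x. Qed.

Lemma addxI (x y z : A) : x + y = x + z -> y = z.
Proof. intro H. now rewrite <- (addKx x y), H, addKx. Qed.

Lemma opp_unique (x y : A) : x + y = zero A -> y = - x.
Proof. intro H. apply (addxI x). now rewrite H, addxN. Qed.

Lemma opp_unique_l (x y : A) : y + x = zero A -> y = - x.
Proof. intro H. now rewrite <- (addx0 y), <- (addxN x), addA, H, add0x. Qed.

Lemma opp0 : - zero A = zero A.
Proof. symmetry. apply opp_unique, add0x. Qed.

Lemma oppK (x : A) : - - x = x.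
Proof. symmetry. apply opp_unique, addNx. Qed.

Lemma oppD (x y : A) : - (x + y) = - y + - x.
Proof.
  symmetry. apply opp_unique.
  now rewrite <- addA, (addA y), addxN, add0x, addxN.
Qed.

Lemma idem_eq0 (x : A) : x + x = x -> x = zero A.
Proof. intro H. apply (addxI x). now rewrite addx0. Qed.

Lemma addCA_of_commute (x y z : A) : x + y = y + x -> x + (y + z) = y + (x + z).
Proof. intro H. now rewrite !addA, H. Qed.

End GroupLaws.

Section DerivedAction.

Variables (Sg : Sig) (C : MCI Sg) (R E : OGroup Sg).
Variables (act : R -> E -> E) (bact : Op2 Sg -> R -> E -> E).
Hypothesis Hda : derived_action C act bact.

Lemma derived_action_axiomsR : mci_object_axioms R.
Proof. destruct Hda as (B & i & p & sg & (_ & HR & _) & _). exact (inC_axioms HR). Qed.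

Lemma derived_action_axiomsE : mci_object_axioms E.
Proof. destruct Hda as (B & i & p & sg & (HE & _) & _). exact (inC_axioms HE). Qed.

Lemma derived_action_embedding :
  exists (B : OGroup Sg) (i : E -> B) (sigma : R -> B),
    mci_object_axioms B /\ hom i /\ hom sigma /\
    (forall e e', i e = i e' -> e = e') /\
    (forall r e, i (act r e) = sigma r + i e - sigma r) /\
    (forall o r e, i (bact o r e) = bin o (sigma r) (i e)).
Proof.
  destruct Hda as (B & i & p & sg & (_ & _ & HB & Hi & _ & Hs & Hinj & _) & Ha & Hb).
  exists B, i, sg. split; [exact (inC_axioms HB) | tauto].
Qed.

Lemma act_addr r (e1 e2 : E) : act r (e1 + e2) = act r e1 + act r e2.
Proof.
  destruct derived_action_embedding
    as (B & i & sg & AB & (_ & iD & _) & _ & inj & Ha & _).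
  apply inj. rewrite iD, !Ha, iD, <- !(addA AB).
  now rewrite (addKx AB).
Qed.

Lemma act_addl (r1 r2 : R) e : act (r1 + r2) e = act r1 (act r2 e).
Proof.
  destruct derived_action_embedding
    as (B & i & sg & AB & _ & (_ & sD & _) & inj & Ha & _).
  apply inj. rewrite !Ha, sD, (oppD AB).
  now rewrite <- !(addA AB).
Qed.

Lemma act0 e : act (zero R) e = e.
Proof.
  destruct derived_action_embedding
    as (B & i & sg & AB & _ & (s0 & _) & inj & Ha & _).
  apply inj. now rewrite Ha, s0, (opp0 AB), (add0x AB), (addx0 AB).
Qed.

Lemma act_opp r (e : E) : act r (- e) = - act r e.
Proof.
  pose proof derived_action_axiomsE as AE.
  apply (opp_unique AE). rewrite <- act_addr, (addxN AE).
  destruct derived_action_embedding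
    as (B & i & sg & AB & (i0 & _) & _ & inj & Ha & _).
  apply inj. now rewrite Ha, !i0, <- (addA AB), (add0x AB), (addxN AB).
Qed.

Lemma bact_addl o (r1 r2 : R) e : bact o (r1 + r2) e = bact o r1 e + bact o r2 e.
Proof.
  destruct derived_action_embedding
    as (B & i & sg & AB & (_ & iD & _) & (_ & sD & _) & inj & _ & Hb).
  apply inj. now rewrite iD, !Hb, sD, (binDl AB).
Qed.

Lemma bact_addr o r (e1 e2 : E) : bact o r (e1 + e2) = bact o r e1 + bact o r e2.
Proof.
  destruct derived_action_embedding
    as (B & i & sg & AB & (_ & iD & _) & _ & inj & _ & Hb).
  apply inj. now rewrite iD, !Hb, iD, (binDr AB).
Qed.

Lemma add_bactC o r e (x : E) : x + bact o r e = bact o r e + x.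
Proof.
  destruct derived_action_embedding
    as (B & i & sg & AB & (_ & iD & _) & _ & inj & _ & Hb).
  apply inj. now rewrite !iD, Hb, (add_binC AB).
Qed.

End DerivedAction.

Section DerivationSum.

Variables (Sg : Sig) (C : MCI Sg) (R E' R' : OGroup Sg).
Variables (d' : E' -> R') (act' : R' -> E' -> E') (bact' : Op2 Sg -> R' -> E' -> E').
Variables (f0 g0 : R -> R') (s s' : R -> E').

Hypothesis HR : mci_object_axioms R.
Hypothesis Hda : derived_action C act' bact'.
Hypothesis Hact_d' : forall e e', act' (d' e) e' = e + e' - e.
Hypothesis Hbact_d' : forall o e e', bact' o (d' e) e' = bin o e e'.
Hypothesis Hf00 : f0 (zero R) = zero R'.
Hypothesis Hs : derivation act' bact' f0 s.
Hypothesis Hg0 : forall r, g0 r = f0 r + d' (s r).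
Hypothesis Hs' : derivation act' bact' g0 s'.

Let AE' : mci_object_axioms E' := derived_action_axiomsE Hda.

Lemma derivation_zero : s (zero R) = zero E'.
Proof.
  apply (idem_eq0 AE').
  destruct Hs as (sD & _).
  pose proof (sD (zero R) (zero R)) as H0.
  rewrite (add0x HR), (opp0 HR), Hf00, (act0 Hda) in H0.
  now symmetry.
Qed.

Lemma derivation_opp h : act' (f0 (- h)) (s (- h)) = - s h.
Proof.
  apply (opp_unique_l AE').
  destruct Hs as (sD & _).
  now rewrite <- sD, (addNx HR), derivation_zero.
Qed.

Lemma derivation_add : derivation act' bact' f0 (fun r => s r + s' r).
Proof.
  destruct Hs as (sD & sB), Hs' as (s'D & s'B).
  split.
  - intros g h.
    rewrite sD, s'D, Hg0, (act_addl Hda), Hact_d', !(act_addr Hda), (act_opp Hda).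
    rewrite derivation_opp, (oppK AE'), <- !(addA AE').
    now rewrite (addNKx AE').
  - intros o g h.
    rewrite sB, s'B, !Hg0, !(bact_addl Hda), !Hbact_d', (bin_opc AE').
    rewrite !(bact_addr Hda), (binDl AE'), !(binDr AE'), <- !(addA AE').
    set (c := bin o (s g) (s h)).
    set (b := bact' (opc o) (f0 h) (s g)).
    set (e := bin o (s g) (s' h)).
    set (a1 := bact' o (f0 g) (s' h)).
    set (b1 := bact' (opc o) (f0 h) (s' g)).
    rewrite (addCA_of_commute AE' c a1 _ (add_bactC Hda _ _ _ _)).
    rewrite (addCA_of_commute AE' b a1 _ (add_bactC Hda _ _ _ _)).
    rewrite (addCA_of_commute AE' e b1 _ (add_bactC Hda _ _ _ _)).
    now rewrite (addCA_of_commute AE' c b1 _ (add_bactC Hda _ _ _ _)).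
Qed.

End DerivationSum.

Lemma connects_add (Sg : Sig) (E R E' R' : OGroup Sg) (d : E -> R) (d' : E' -> R')
    (s s' : R -> E') (f1 g1 k1 : E -> E') (f0 g0 k0 : R -> R') :
  (forall x y z : R', x + (y + z) = x + y + z) ->
  (forall x y z : E', x + (y + z) = x + y + z) ->
  (forall x y, d' (x + y) = d' x + d' y) ->
  connects d d' s f1 f0 g1 g0 -> connects d d' s' g1 g0 k1 k0 ->
  connects d d' (fun r => s r + s' r) f1 f0 k1 k0.
Proof.
  intros addA_R' addA_E' d'D (Hg0 & Hg1) (Hk0 & Hk1).
  split.
  - intro r. now rewrite Hk0, Hg0, d'D, addA_R'.
  - intro e. now rewrite Hk1, Hg1, addA_E'.
Qed.

Theorem mainTheorem4 (Sg : Sig) (C : MCI Sg) (E R E' R' : OGroup Sg)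
  (d : E -> R) (act : R -> E -> E) (bact : Op2 Sg -> R -> E -> E)
  (d' : E' -> R') (act' : R' -> E' -> E') (bact' : Op2 Sg -> R' -> E' -> E')
  (f1 g1 k1 : E -> E') (f0 g0 k0 : R -> R') (s s' : R -> E') :
  crossed_module C d act bact ->
  crossed_module C d' act' bact' ->
  cm_morphism d act bact d' act' bact' f1 f0 ->
  cm_morphism d act bact d' act' bact' g1 g0 ->
  cm_morphism d act bact d' act' bact' k1 k0 ->
  derivation act' bact' f0 s -> connects d d' s f1 f0 g1 g0 ->
  derivation act' bact' g0 s' -> connects d d' s' g1 g0 k1 k0 ->
  derivation act' bact' f0 (fun r => (s r + s' r)%og) /\
  connects d d' (fun r => (s r + s' r)%og) f1 f0 k1 k0.
Proof.
  intros (_ & Hda & _) (Hd' & Hda' & _ & _ & Hact_d' & Hbact_d') (_ & (Hf00 & _) & _)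
    _ _ Hs Hsg Hs' Hs'k.
  pose proof (derived_action_axiomsR Hda) as AR.
  destruct Hd' as (_ & d'D & _).
  split.
  - exact (derivation_add d' AR Hda' Hact_d' Hbact_d' Hf00 Hs (proj1 Hsg) Hs').
  - exact (connects_add (addA (derived_action_axiomsR Hda'))
      (addA (derived_action_axiomsE Hda')) d'D Hsg Hs'k).
Qed.
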